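(* Let $k\ge2$ be an integer and $\lambda>0$. If the median of the Poisson distribution of order $k$ with parameter $\lambda$ is $0$, then its mode is also $0$ (and $0$ is the unique mode).
   Context: For an integer $k\ge1$ and a real $\lambda>0$, the Poisson distribution of order $k$ with parameter $\lambda$ is the distribution on $\{0,1,2,\dots\}$ with probability mass function $$f_k(n;\lambda)=e^{-k\lambda}\sum_{\substack{n_1,\dots,n_k\ge 0\\ n_1+2n_2+\dots+kn_k=n}}\frac{\lambda^{n_1+\dots+n_k}}{n_1!\cdots n_k!},\qquad n=0,1,2,\dots$$ If $Y$ is a random variable with this distribution, the median is defined as the smallest integer $\nu$ such that $P(Y\le\nu)\ge\frac12$. A mode is any $n$ at which $f_k(n;\lambda)$ attains its global maximum over $n\ge0$. *)

From mathcomp Require Import all_boot all_order all_algebra.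
From mathcomp Require Import reals sequences exp.
Set Implicit Arguments. Unset Strict Implicit. Unset Printing Implicit Defensive.
Import Order.TTheory GRing.Theory Num.Theory.
Local Open Scope ring_scope.

(* Poisson pmf of order k:
   f_k(n; lam) = e^{-k lam} * sum over (n_1,...,n_k) >= 0 with
   n_1 + 2 n_2 + ... + k n_k = n of lam^(n_1+...+n_k) / (n_1! ... n_k!).
   The tuple is indexed by i : 'I_k representing j = i+1; each n_j <= n
   (since j * n_j <= n), so ranging over {ffun 'I_k -> 'I_n.+1} is exhaustive. *)
Definition poisson_k_pmf (R : realType) (k : nat) (lam : R) (n : nat) : R :=
  expR (- (k%:R * lam)) *
  \sum_(t : {ffun 'I_k -> 'I_n.+1} | (\sum_(i < k) i.+1 * t i)%N == n)
     lam ^+ (\sum_(i < k) t i)%N / ((\prod_(i < k) (t i)`!)%N)%:R.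

Definition poisson_k_cdf (R : realType) (k : nat) (lam : R) (nu : nat) : R :=
  \sum_(m < nu.+1) poisson_k_pmf k lam m.

Definition is_median_poisson_k (R : realType) (k : nat) (lam : R) (nu : nat) : Prop :=
  (2^-1 <= poisson_k_cdf k lam nu) /\
  (forall m : nat, (m < nu)%N -> poisson_k_cdf k lam m < 2^-1).

Definition is_mode_poisson_k (R : realType) (k : nat) (lam : R) (n : nat) : Prop :=
  forall m : nat, poisson_k_pmf k lam m <= poisson_k_pmf k lam n.

From mathcomp Require Import all_boot all_order all_algebra.
From mathcomp Require Import reals sequences exp.
From mathcomp Require Import lra.
Set Implicit Arguments. Unset Strict Implicit. Unset Printing Implicit Defensive.
Import Order.TTheory GRing.Theory Num.Theory.
Local Open Scope ring_scope.

(* Multiplying out e^{k lam} = prod_{j=1}^k sum_m lam^m / m! turns it into a sum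
   over tuples (n_1, ..., n_k), and e^{k lam} f_k(n) is the part of this sum over
   the tuples of weight n_1 + 2 n_2 + ... + k n_k = n.  For n <> 0 these terms and
   the term 1 of the zero tuple are distinct terms of a truncation of the
   product, which is strictly below e^{k lam}; hence f_k(n) + f_k(0) < 1.  A
   median 0 means f_k(0) >= 1/2, so f_k(n) < f_k(0). *)

Definition poisson_k_term (R : realType) (k N : nat) (lam : R)
    (t : {ffun 'I_k -> 'I_N}) : R :=
  lam ^+ (\sum_(i < k) t i)%N / ((\prod_(i < k) (t i)`!)%N)%:R.

Definition ffun_weight (k N : nat) (t : {ffun 'I_k -> 'I_N}) : nat :=
  \sum_(i < k) i.+1 * t i.

Lemma poisson_k_pmfE (R : realType) (k n : nat) (lam : R) :
  poisson_k_pmf k lam n = expR (- (k%:R * lam)) *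
    \sum_(t : {ffun 'I_k -> 'I_n.+1} | ffun_weight t == n) poisson_k_term lam t.
Proof. by []. Qed.

Lemma poisson_k_term_ge0 (R : realType) (k N : nat) (lam : R)
    (t : {ffun 'I_k -> 'I_N}) :
  0 <= lam -> 0 <= poisson_k_term lam t.
Proof. by move=> lam_ge0; rewrite divr_ge0 // exprn_ge0. Qed.

Lemma sum_poisson_k_term (R : realType) (k N : nat) (lam : R) :
  \sum_(t : {ffun 'I_k -> 'I_N}) poisson_k_term lam t =
  \prod_(i < k) \sum_(j < N) lam ^+ j / j`!%:R.
Proof.
rewrite bigA_distr_bigA; apply: eq_bigr => t _.
by rewrite /poisson_k_term prodf_div prodrXr natr_prod.
Qed.

Lemma exp_partial_sum_lt (R : realType) (x : R) (N : nat) : 0 < x ->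
  \sum_(j < N) x ^+ j / j`!%:R < expR x.
Proof.
move=> x_gt0.
have partialE n : \sum_(j < n) x ^+ j / j`!%:R = series (exp_coeff x) n.
  by rewrite /series /= big_mkord; apply: eq_bigr => j _; rewrite exp_coeffE mulrC.
have le_exp : series (exp_coeff x) N.+1 <= expR x.
  apply: nondecreasing_cvgn_le; last exact: is_cvg_series_exp_coeff.
  by apply: nondecreasing_series => n _ _; rewrite exp_coeff_ge0 // ltW.
apply: lt_le_trans le_exp.
rewrite -partialE big_ord_recr /= ltrDl.
by rewrite divr_gt0 ?exprn_gt0 // ltr0n fact_gt0.
Qed.

Lemma sum_poisson_k_term_lt (R : realType) (k N : nat) (lam : R) :
  (0 < k)%N -> 0 < lam ->
  \sum_(t : {ffun 'I_k -> 'I_N}) poisson_k_term lam t < expR (k%:R * lam).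
Proof.
move=> k_gt0 lam_gt0.
rewrite sum_poisson_k_term expRM_natl -[in ltRHS](card_ord k) -prodr_const.
apply: ltr_prod; first by apply/hasP; exists (Ordinal k_gt0); rewrite ?mem_index_enum.
move=> i _; rewrite exp_partial_sum_lt // andbT.
by apply: sumr_ge0 => j _; rewrite divr_ge0 // exprn_ge0 // ltW.
Qed.

Lemma poisson_k_term0 (R : realType) (k N : nat) (lam : R) :
  poisson_k_term lam ([ffun => ord0] : {ffun 'I_k -> 'I_N.+1}) = 1.
Proof.
by rewrite /poisson_k_term !big1 ?expr0 ?divr1 // => i _; rewrite ffunE.
Qed.

Lemma ffun_weight0 (k N : nat) :
  ffun_weight ([ffun => ord0] : {ffun 'I_k -> 'I_N.+1}) = 0%N.
Proof. by rewrite /ffun_weight big1 // => i _; rewrite ffunE muln0. Qed.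

Lemma poisson_k_pmf0 (R : realType) (k : nat) (lam : R) :
  poisson_k_pmf k lam 0 = expR (- (k%:R * lam)).
Proof.
rewrite poisson_k_pmfE (big_pred1 [ffun => ord0]) ?poisson_k_term0 ?mulr1 //.
move=> t /=; apply/idP/eqP => [|->]; last by rewrite ffun_weight0.
rewrite sum_nat_eq0 => /forallP weight0; apply/ffunP => i; rewrite ffunE.
by apply/val_inj/eqP; have := weight0 i; rewrite muln_eq0.
Qed.

Lemma poisson_k_pmfD0_lt1 (R : realType) (k n : nat) (lam : R) :
  (0 < k)%N -> 0 < lam -> n != 0%N ->
  poisson_k_pmf k lam n + poisson_k_pmf k lam 0 < 1.
Proof.
move=> k_gt0 lam_gt0 n_neq0.
rewrite poisson_k_pmfE poisson_k_pmf0 -[X in _ + X]mulr1 -mulrDr.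
have sum_le : \sum_(t : {ffun 'I_k -> 'I_n.+1} | ffun_weight t == n)
    poisson_k_term lam t + 1 <=
    \sum_(t : {ffun 'I_k -> 'I_n.+1}) poisson_k_term lam t.
  rewrite [X in _ <= X](bigID (fun t => ffun_weight t == n)) lerD2l /=.
  rewrite (bigD1 [ffun => ord0]) ?ffun_weight0 1?eq_sym //= poisson_k_term0 lerDl.
  by apply: sumr_ge0 => t _; apply/poisson_k_term_ge0/ltW.
apply: le_lt_trans (ler_wpM2l (ltW (expR_gt0 _)) sum_le) _.
rewrite -[X in _ < X](expRxMexpNx_1 (k%:R * lam)) [X in X < _]mulrC.
rewrite ltr_pM2r ?expR_gt0 //.
exact: sum_poisson_k_term_lt.
Qed.

Theorem mainTheorem4 (R : realType) (k : nat) (lam : R) :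
  (2 <= k)%N -> 0 < lam ->
  is_median_poisson_k k lam 0%N ->
  is_mode_poisson_k k lam 0%N /\
  (forall n : nat, is_mode_poisson_k k lam n -> n = 0%N).
Proof.
move=> k_ge2 lam_gt0 [+ _]; rewrite /poisson_k_cdf big_ord1 => half_le_pmf0.
have k_gt0 : (0 < k)%N by apply: leq_trans k_ge2.
have pmf_lt_pmf0 n : n != 0%N -> poisson_k_pmf k lam n < poisson_k_pmf k lam 0.
  by move=> /(poisson_k_pmfD0_lt1 k_gt0 lam_gt0); lra.
split=> [n | n mode_n]; first by have [->|/pmf_lt_pmf0/ltW] := eqVneq n 0%N.
apply/eqP; apply: contraTT (mode_n 0%N) => /pmf_lt_pmf0.
by rewrite ltNge.
Qed.
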